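(* Let $\mathbf A\in\mathcal V_n$, let $X_k$ be the set of homomorphisms $\mathbf A\to\mathbf M_k$ for $k\in[0,n]$, and let $Y=\bigcup_{k\in[0,n]}X_k\times\Omega_k$. Define $\preccurlyeq$ on $Y$ by: for $(x,\omega_1)\in X_j\times\Omega_j$ and $(y,\omega_2)\in X_k\times\Omega_k$, $(x,\omega_1)\preccurlyeq(y,\omega_2)$ iff there is $R\in\mathcal R_{\omega_1\omega_2}$ with $(x(a),y(a))\in R$ for all $a\in A$. The relation $\preccurlyeq$, which is a quasi-order on $Y$, is antisymmetric; hence $\preccurlyeq$ is a partial order on $Y$.
   Context: Fix an integer $n\ge1$; $[m,p]=\{i\in\mathbb Z:m\le i\le p\}$. Algebras have signature $(\otimes,\oplus,\wedge,\vee,\neg,\top,\mathbf f_0,\dots,\mathbf f_n,\mathbf t_0,\dots,\mathbf t_n,\bot)$. $\mathbf M_0$ has universe $\{\top^0,\mathbf f^0,\mathbf t^0,\bot^0\}$, knowledge order $\bot^0<\mathbf f^0,\mathbf t^0<\top^0$ ($\mathbf f^0,\mathbf t^0$ incomparable), truth order $\mathbf f^0<\top^0,\bot^0<\mathbf t^0$ ($\top^0,\bot^0$ incomparable); $\otimes,\oplus$ are meet/join in the knowledge order, $\wedge,\vee$ meet/join in the truth order; $\neg$ swaps $\mathbf f^0,\mathbf t^0$ and fixes $\top^0,\bot^0$; $\top,\bot$ name $\top^0,\bot^0$, all $\mathbf f_i$ name $\mathbf f^0$, all $\mathbf t_i$ name $\mathbf t^0$. For $k\in[1,n]$, $\mathbf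 M_k$ has universe $\{\top^k,\bot^k,\mathbf f^k,\mathbf t^k,\mathbf 0^k,\mathbf 1^k\}$, knowledge order generated by $\bot^k<\mathbf f^k<\mathbf 0^k<\top^k$, $\bot^k<\mathbf t^k<\mathbf 1^k<\top^k$, truth order generated by $\mathbf 0^k<\mathbf f^k<\top^k<\mathbf t^k<\mathbf 1^k$, $\mathbf f^k<\bot^k<\mathbf t^k$; operations as for $\mathbf M_0$; $\neg$ swaps $\mathbf f^k\leftrightarrow\mathbf t^k$, $\mathbf 0^k\leftrightarrow\mathbf 1^k$, fixes $\top^k,\bot^k$; $\top,\bot$ name $\top^k,\bot^k$; $\mathbf f_i$ names $\mathbf 0^k$ if $i<k$ and $\mathbf f^k$ if $i\ge k$; $\mathbf t_i$ names $\mathbf 1^k$ if $i<k$ and $\mathbf t^k$ if $i\ge k$. $\mathcal V_n$ is the class of algebras isomorphic to subalgebras of products of copies of $\mathbf M_0,\dots,\mathbf M_n$. Carriers: $\delta_0,\gamma_0\colon M_0\to\{0,1\}$ with $\delta_0^{-1}(1)=\{\bot^0,\mathbf t^0\}$, $\gamma_0^{-1}(1)=\{\top^0,\mathbf t^0\}$; for $k\in[1,n]$, $\gamma_k,\delta_k\colon M_k\to\{0,1\}$ with $\gamma_k^{-1}(1)=\{\mathbf 1^k\}$, $\delta_k^{-1}(1)=\{\mathbf f^k,\bot^k,\top^k,\mathbf t^k,\mathbf 1^k\}$; $\Omega_k=\{\gamma_k,\delta_k\}$. For $\omega_1\in\Omega_j$, $\omega_2\in\Omega_k$, $\mathcal R_{\omega_1\omega_2}$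 is the (possibly empty) set of subuniverses of $\mathbf M_j\times\mathbf M_k$ maximal with respect to being contained in $\{(a,b)\in M_j\times M_k\mid\omega_1(a)\le\omega_2(b)\}$. That $\preccurlyeq$ is reflexive and transitive is known (from a general piggyback-duality result) and may be taken as given. *)

From mathcomp Require Import all_boot.
Set Implicit Arguments. Unset Strict Implicit. Unset Printing Implicit Defensive.

Record alg (n : nat) := Alg {
  car : Type;
  a_otimes : car -> car -> car;
  a_oplus : car -> car -> car;
  a_wedge : car -> car -> car;
  a_vee : car -> car -> car;
  a_neg : car -> car;
  a_top : car;
  a_f : 'I_n.+1 -> car;
  a_t : 'I_n.+1 -> car;
  a_bot : car }.

Definition is_hom n (A B : alg n) (h : car A -> car B) : Prop :=
  (forall a b, h (a_otimes a b) = a_otimes (h a) (h b)) /\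
  (forall a b, h (a_oplus a b) = a_oplus (h a) (h b)) /\
  (forall a b, h (a_wedge a b) = a_wedge (h a) (h b)) /\
  (forall a b, h (a_vee a b) = a_vee (h a) (h b)) /\
  (forall a, h (a_neg a) = a_neg (h a)) /\
  h (a_top A) = a_top B /\
  (forall i, h (a_f A i) = a_f B i) /\ (forall i, h (a_t A i) = a_t B i) /\
  h (a_bot A) = a_bot B.

Definition subuniverse n (A : alg n) (S : car A -> Prop) : Prop :=
  (forall a b, S a -> S b -> S (a_otimes a b)) /\
  (forall a b, S a -> S b -> S (a_oplus a b)) /\
  (forall a b, S a -> S b -> S (a_wedge a b)) /\
  (forall a b, S a -> S b -> S (a_vee a b)) /\
  (forall a, S a -> S (a_neg a)) /\
  S (a_top A) /\
  (forall i, S (a_f A i)) /\ (forall i, S (a_t A i)) /\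
  S (a_bot A).

Definition prod_alg n (I : Type) (F : I -> alg n) : alg n :=
  @Alg n (forall i, car (F i))
    (fun a b i => a_otimes (a i) (b i))
    (fun a b i => a_oplus (a i) (b i))
    (fun a b i => a_wedge (a i) (b i))
    (fun a b i => a_vee (a i) (b i))
    (fun a i => a_neg (a i))
    (fun i => a_top (F i))
    (fun j i => a_f (F i) j)
    (fun j i => a_t (F i) j)
    (fun i => a_bot (F i)).

Definition prod2 n (A B : alg n) : alg n :=
  @Alg n (car A * car B)%type
    (fun a b => (a_otimes a.1 b.1, a_otimes a.2 b.2))
    (fun a b => (a_oplus a.1 b.1, a_oplus a.2 b.2))
    (fun a b => (a_wedge a.1 b.1, a_wedge a.2 b.2))
    (fun a b => (a_vee a.1 b.1, a_vee a.2 b.2))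
    (fun a => (a_neg a.1, a_neg a.2))
    (a_top A, a_top B)
    (fun j => (a_f A j, a_f B j))
    (fun j => (a_t A j, a_t B j))
    (a_bot A, a_bot B).

Definition glb (T : Type) (s : seq T) (le : T -> T -> bool) (x y : T) : T :=
  head x [seq z <- s | [&& le z x, le z y &
            all (fun w => (le w x && le w y) ==> le w z) s]].
Definition lub (T : Type) (s : seq T) (le : T -> T -> bool) (x y : T) : T :=
  glb s (fun a b => le b a) x y.

Inductive e4 := Top0 | Bot0 | F0 | T0.
Definition enum4 := [:: Top0; Bot0; F0; T0].
Definition k0le (x y : e4) : bool :=
  match x, y with
  | Bot0, _ => true | _, Top0 => true | F0, F0 => true | T0, T0 => true
  | _, _ => false end.
Definition t0le (x y : e4) : bool :=
  match x, y with
  | F0, _ => true | _, T0 => true | Top0, Top0 => true | Bot0, Bot0 => true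
  | _, _ => false end.
Definition neg0 (x : e4) : e4 :=
  match x with F0 => T0 | T0 => F0 | x => x end.

Definition M0 (n : nat) : alg n :=
  @Alg n e4 (glb enum4 k0le) (lub enum4 k0le) (glb enum4 t0le) (lub enum4 t0le)
    neg0 Top0 (fun _ => F0) (fun _ => T0) Bot0.

Inductive e6 := TopK | BotK | FK | TK | ZeroK | OneK.
Definition enum6 := [:: TopK; BotK; FK; TK; ZeroK; OneK].
(* knowledge order: reflexive-transitive closure of
   bot < f < 0 < top, bot < t < 1 < top *)
Definition kkle (x y : e6) : bool :=
  match x, y with
  | BotK, _ => true | _, TopK => true
  | FK, FK | FK, ZeroK | ZeroK, ZeroK => true
  | TK, TK | TK, OneK | OneK, OneK => true
  | _, _ => false end.
(* truth order: reflexive-transitive closure of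
   0 < f < top < t < 1, f < bot < t *)
Definition tkle (x y : e6) : bool :=
  match x, y with
  | ZeroK, _ => true | _, OneK => true
  | FK, FK | FK, TopK | FK, BotK | FK, TK => true
  | TopK, TopK | TopK, TK | BotK, BotK | BotK, TK | TK, TK => true
  | _, _ => false end.
Definition negk (x : e6) : e6 :=
  match x with FK => TK | TK => FK | ZeroK => OneK | OneK => ZeroK | x => x end.

Definition Mk (n k : nat) : alg n :=
  @Alg n e6 (glb enum6 kkle) (lub enum6 kkle) (glb enum6 tkle) (lub enum6 tkle)
    negk TopK
    (fun i => if (i < k)%N then ZeroK else FK)
    (fun i => if (i < k)%N then OneK else TK)
    BotK.

Definition Malg (n k : nat) : alg n :=
  match k with 0 => M0 n | S _ => Mk n k end.

(* A is isomorphic to a subalgebra of a product of copies of M_0,...,M_n,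
   i.e. A embeds (injective homomorphism) into such a product. *)
Definition in_Vn n (A : alg n) : Prop :=
  exists (I : Type) (c : I -> 'I_n.+1)
         (h : car A -> car (prod_alg (fun i => Malg n (c i)))),
    is_hom h /\ injective h.

Inductive om := Gam | Del.

Definition gamma0 (x : e4) : bool := match x with Top0 | T0 => true | _ => false end.
Definition delta0 (x : e4) : bool := match x with Bot0 | T0 => true | _ => false end.
Definition gammak (x : e6) : bool := match x with OneK => true | _ => false end.
Definition deltak (x : e6) : bool := match x with ZeroK => false | _ => true end.

Definition omega (n k : nat) (w : om) : car (Malg n k) -> bool :=
  match k return car (Malg n k) -> bool with
  | 0 => match w with Gam => gamma0 | Del => delta0 end
  | S _ => match w with Gam => gammak | Del => deltak end
  end.

Definition RR (n j k : nat) (w1 w2 : om)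
    (R : car (Malg n j) -> car (Malg n k) -> Prop) : Prop :=
  [/\ subuniverse (A := prod2 (Malg n j) (Malg n k)) (fun p => R p.1 p.2),
      (forall a b, R a b -> (omega w1 a <= omega w2 b)%N)
    & (forall R' : car (Malg n j) -> car (Malg n k) -> Prop,
        subuniverse (A := prod2 (Malg n j) (Malg n k)) (fun p => R' p.1 p.2) ->
        (forall a b, R' a b -> (omega w1 a <= omega w2 b)%N) ->
        (forall a b, R a b -> R' a b) ->
        (forall a b, R' a b -> R a b))].

(* raw elements: an index k in [0,n], a map A -> M_k and a label for
   gamma_k / delta_k; membership in Y requires the map to be a homomorphism *)
Definition Y n (A : alg n) : Type :=
  {k : 'I_n.+1 & ((car A -> car (Malg n k)) * om)%type}.

Definition inY n (A : alg n) (p : Y A) : Prop := is_hom (projT2 p).1.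

Definition preceq n (A : alg n) (p q : Y A) : Prop :=
  exists R, @RR n (projT1 p) (projT1 q) (projT2 p).2 (projT2 q).2 R /\
            forall a, R ((projT2 p).1 a) ((projT2 q).1 a).

(* If p ≼ q and q ≼ p, the witnessing relations lie inside {(a, b) | ω₁ a ≤ ω₂ b}
   in both directions, so p = (x, ω₁) and q = (y, ω₂) have the same trace
   a ↦ ω₁ (x a) = ω₂ (y a) on A.  Homomorphisms commute with unary polynomials,
   so the traces also agree after applying any unary polynomial.  On constants
   this pins down the index: f_i and t_i are told apart by ω exactly when i < k
   (or k = 0), and ⊤ then tells γ from δ.  Finally, in each M_k the functions
   u ↦ ω (t u), t a unary polynomial, separate points, so x = y. *)
From Stdlib Require Import FunctionalExtensionality.
From mathcomp Require Import all_boot.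

Set Implicit Arguments.
Unset Strict Implicit.
Unset Printing Implicit Defensive.

Inductive uterm (n : nat) : Type :=
| UVar
| UOtimes of uterm n & uterm n
| UOplus of uterm n & uterm n
| UWedge of uterm n & uterm n
| UVee of uterm n & uterm n
| UNeg of uterm n
| UTop
| UF of 'I_n.+1
| UT of 'I_n.+1
| UBot.
Arguments UVar {n}.
Arguments UTop {n}.
Arguments UBot {n}.

Fixpoint ueval n (B : alg n) (b : car B) (t : uterm n) : car B :=
  match t with
  | UVar => b
  | UOtimes t1 t2 => a_otimes (ueval b t1) (ueval b t2)
  | UOplus t1 t2 => a_oplus (ueval b t1) (ueval b t2)
  | UWedge t1 t2 => a_wedge (ueval b t1) (ueval b t2)
  | UVee t1 t2 => a_vee (ueval b t1) (ueval b t2)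
  | UNeg t1 => a_neg (ueval b t1)
  | UTop => a_top B
  | UF i => a_f B i
  | UT i => a_t B i
  | UBot => a_bot B
  end.

Lemma hom_ueval n (A B : alg n) (h : car A -> car B) :
  is_hom h -> forall a t, h (ueval a t) = ueval (h a) t.
Proof.
case=> [hotimes [hoplus [hwedge [hvee [hneg [htop [hf [ht hbot]]]]]]]] a.
by elim=> /= [|t1 <- t2 <-|t1 <- t2 <-|t1 <- t2 <-|t1 <- t2 <-|t1 <-| |i|i|].
Qed.

Lemma omega_ueval_separates n k w (u v : car (Malg n k)) :
  (forall t : uterm n, omega w (ueval u t) = omega w (ueval v t)) -> u = v.
Proof.
move=> sep.
move: (sep UVar) (sep (UNeg UVar)).
move: (sep (UOtimes UVar (UT ord0))) (sep (UNeg (UOtimes UVar (UT ord0)))).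
move: (sep (UOplus UVar (UT ord0))) (sep (UNeg (UOplus UVar (UT ord0)))).
move: (sep (UOplus UVar (UF ord0))) (sep (UNeg (UOplus UVar (UF ord0)))).
by clear sep; case: k u v => [|k] u v; case: w; case: u; case: v.
Qed.

Lemma omega_const_separated n k w (i : 'I_n.+1) :
  omega w (a_t (Malg n k) i) && ~~ omega w (a_f (Malg n k) i)
  = (k == 0) || (i < k).
Proof. by case: k => [|k]; case: w => //=; case: ifP. Qed.

Lemma separated_index_inj n (j k : nat) : j <= n -> k <= n ->
  (forall i : 'I_n.+1, (j == 0) || (i < j) = (k == 0) || (i < k)) -> j = k.
Proof.
wlog jk : j k / j < k => [hwlog hj hk sep | hj hk sep].
  case: (ltngtP j k) => [jk|kj|//]; first exact: hwlog.
  by symmetry; apply: hwlog => // i; rewrite sep.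
have := sep (inord (if j == 0 then k else j)).
rewrite inordK; last by rewrite ltnS; case: ifP.
have k0 : (k == 0) = false by apply/negbTE; rewrite -lt0n (leq_ltn_trans _ jk).
by case: (j =P 0) => [->|/eqP/negbTE j0]; rewrite ?j0 ?k0 ltnn ?jk.
Qed.

Lemma omega_top_inj n k w1 w2 :
  omega w1 (a_top (Malg n k)) = omega w2 (a_top (Malg n k)) -> w1 = w2.
Proof. by case: k; case: w1; case: w2. Qed.

Definition trace n (A : alg n) (p : Y A) (a : car A) : bool :=
  omega (projT2 p).2 ((projT2 p).1 a).

Lemma preceq_trace_le n (A : alg n) (p q : Y A) :
  preceq p q -> forall a, trace p a <= trace q a.
Proof. by case=> R [[_ le_omega _] xRy] a; apply: le_omega. Qed.

Lemma preceq_trace_eq n (A : alg n) (p q : Y A) :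
  preceq p q -> preceq q p -> trace p =1 trace q.
Proof.
move=> pq qp a; move: (preceq_trace_le pq a) (preceq_trace_le qp a).
by case: (trace p a); case: (trace q a).
Qed.

Lemma trace_inj n (A : alg n) (p q : Y A) :
  inY p -> inY q -> trace p =1 trace q -> p = q.
Proof.
case: p => j [x w1]; case: q => k [y w2]; rewrite /inY /trace /= => hx hy E.
have Eu a t : omega w1 (ueval (x a) t) = omega w2 (ueval (y a) t).
  by rewrite -(hom_ueval hx) -(hom_ueval hy); apply: E.
(* Ground terms are evaluated at the arbitrary point [a_top A]. *)
have jk : j = k.
  apply/val_inj/separated_index_inj; [exact: ltn_ord j | exact: ltn_ord k | move=> i].
  rewrite -(@omega_const_separated _ _ w1) -(@omega_const_separated _ _ w2).
  by move: (Eu (a_top A) (UT i)) (Eu (a_top A) (UF i)) => /= -> ->.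
subst k; have w12 : w1 = w2 := omega_top_inj (Eu (a_top A) UTop); subst w2.
suff -> : y = x by [].
apply: functional_extensionality => a.
by symmetry; apply: (omega_ueval_separates (w := w1)) => t; apply: Eu.
Qed.

Theorem lemma7p6 (n : nat) (hn : (1 <= n)%N) (A : alg n) (hA : in_Vn A)
  (p q : Y A) :
  inY p -> inY q -> preceq p q -> preceq q p -> p = q.
Proof.
move=> hp hq pq qp.
by apply: trace_inj => //; apply: preceq_trace_eq.
Qed.
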